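(* Let $k$ be a positive integer and let $m>0$. Let $G$ be a bipartite graph with parts $A$ and $B$ that does not contain $K_{k,k}$ as a subgraph, and assume that $d_G(u)\leq m$ for all $u\in A$. Then $G$ has a spanning subgraph $G'$ such that $e(G')\geq e(G)/(k+1)$ and $d_{G'}(u,u')\leq k\,m^{1-1/k}$ for any two distinct $u,u'\in A$.
   Context: $d_G(u)$ is the degree of $u$ in $G$; $d_G(u,u')$ is the number of common neighbours of $u$ and $u'$ in $G$ (the codegree). *)

From HB Require Import structures.
From mathcomp Require Import all_boot all_order all_algebra.
From mathcomp Require Import reals exp.
Set Implicit Arguments. Unset Strict Implicit. Unset Printing Implicit Defensive.
Import Order.TTheory GRing.Theory Num.Theory.

(* A bipartite graph with parts A and B is represented by its edge set
   G : {set A * B}; the edge set of a spanning subgraph is a subset of G. *)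

Definition degA (A B : finType) (G : {set A * B}) (u : A) : nat :=
  #|[set v : B | (u, v) \in G]|.

Definition codegA (A B : finType) (G : {set A * B}) (u u' : A) : nat :=
  #|[set v : B | ((u, v) \in G) && ((u', v) \in G)]|.

Definition contains_Kst (A B : finType) (G : {set A * B}) (s t : nat) : Prop :=
  exists (S : {set A}) (T : {set B}),
    [/\ #|S| = s, #|T| = t & forall u v, u \in S -> v \in T -> (u, v) \in G].

(* G contains K_{k,k} as a subgraph (K_{k,k} is connected for k >= 1, so any
   copy has one side in A and the other in B; by symmetry of K_{k,k} this is
   the only case). *)
Definition contains_Kkk (A B : finType) (G : {set A * B}) (k : nat) : Prop :=
  contains_Kst G k k.

From HB Require Import structures.
From mathcomp Require Import all_boot all_order all_algebra.
From mathcomp Require Import reals exp.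
From mathcomp Require Import zify ring lra.
Set Implicit Arguments. Unset Strict Implicit. Unset Printing Implicit Defensive.
Import Order.TTheory GRing.Theory Num.Theory.

(* Let t := k m^(1-1/k) and take a maximal G' <= G whose codegrees in A are
   at most t. Adding a missing edge uv of G would create a codegree above t,
   so some edge wv of G' has d_G'(u,w) > t - 1: u is "heavy" for w. Charge uv
   to wv; it suffices that every w receives at most k d_G'(w) charges. Let S
   be the heavy vertices of w and x_v the number of G-neighbours of v in S.
   As G has no K_{k,k}, every (k-1)-subset of S lies in the neighbourhoods of
   fewer than k vertices of N_G'(w), so sum_v C(x_v, k-1) <= (k-1) C(|S|, k-1).
   If sum_v x_v exceeded k d_G'(w), the power-mean inequality would turn this
   into (2 sum_v x_v)^(k-1) <= k^(k-1) d_G'(w)^(k-2) (k-1) |S|^(k-1), which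
   heaviness (sum_v x_v > (t - 1) |S|) and d_G'(w) <= m rule out for this t. *)

Lemma card_set_in_sum (I : finType) (P : {set I}) (f : pred I) :
  #|[set i in P | f i]| = \sum_(i in P) f i.
Proof.
rewrite -sum1dep_card big_mkcondr /=.
by apply: eq_bigr => i _; case: (f i).
Qed.

Section Counting.
Variables (T I J : finType).

Lemma double_count (P : {set I}) (Q : {set J}) (r : I -> J -> bool) :
  \sum_(i in P) #|[set j in Q | r i j]| = \sum_(j in Q) #|[set i in P | r i j]|.
Proof.
under eq_bigr do rewrite card_set_in_sum.
under [RHS]eq_bigr do rewrite card_set_in_sum.
exact: exchange_big.
Qed.

Lemma card_set_pair_sum (E : {set I * J}) :
  #|E| = \sum_i \sum_j ((i, j) \in E).
Proof.
rewrite -sum1_card big_mkcond pair_bigA /=.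
by apply: eq_bigr => -[i j] _.
Qed.

Lemma exists_subset_card (X : {set T}) n :
  n <= #|X| -> exists2 Y : {set T}, Y \subset X & #|Y| = n.
Proof.
rewrite -bin_gt0 -cards_draws => /card_gt0P [Y].
by rewrite inE => /andP [sYX /eqP cardY]; exists Y.
Qed.

End Counting.

Section PowerMeans.
Variables (I : finType) (P : {pred I}).

Lemma exp_cross_le a b n : a ^ n.+1 * b + b ^ n.+1 * a <= a ^ n.+2 + b ^ n.+2.
Proof.
rewrite (expnS a n.+1) (expnS b n.+1).
have [le_ab | lt_ba] := leqP a b.
  have : a ^ n.+1 <= b ^ n.+1 by rewrite leq_exp2r.
  nia.
have : b ^ n.+1 <= a ^ n.+1 by rewrite leq_exp2r // ltnW.
nia.
Qed.

Lemma chebyshev_sum_exp (y : I -> nat) n :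
  (\sum_(i in P) y i ^ n.+1) * (\sum_(i in P) y i)
    <= #|P| * \sum_(i in P) y i ^ n.+2.
Proof.
have L : (\sum_(i in P) y i ^ n.+1) * (\sum_(i in P) y i)
    = \sum_(i in P) \sum_(j in P) y i ^ n.+1 * y j by rewrite big_distrlr.
have L' : (\sum_(i in P) y i ^ n.+1) * (\sum_(i in P) y i)
    = \sum_(i in P) \sum_(j in P) y j ^ n.+1 * y i by rewrite L exchange_big.
have R : #|P| * \sum_(i in P) y i ^ n.+2
    = \sum_(i in P) \sum_(j in P) y j ^ n.+2 by rewrite sum_nat_const.
have R' : #|P| * \sum_(i in P) y i ^ n.+2
    = \sum_(i in P) \sum_(j in P) y i ^ n.+2 by rewrite R exchange_big.
rewrite -(@leq_pmul2l 2) // !mul2n -!addnn {1}L L' {1}R' R -!big_split /=.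
apply: leq_sum => i _; rewrite -!big_split; apply: leq_sum => j _ /=.
exact: exp_cross_le.
Qed.

Lemma sum_exp_le_card (y : I -> nat) n :
  (\sum_(i in P) y i) ^ n.+1 <= #|P| ^ n * \sum_(i in P) y i ^ n.+1.
Proof.
elim: n => [|n IH].
  by rewrite expn0 mul1n expn1; apply: leq_sum => i _; rewrite expn1.
rewrite expnS mulnC; apply: leq_trans (leq_mul IH (leqnn _)) _.
by rewrite -mulnA expnS -mulnA (mulnCA #|P|) leq_mul // chebyshev_sum_exp.
Qed.

Lemma exp_subn_le_ffact n j : (n - j) ^ j.+1 <= n ^_ j.+1.
Proof.
rewrite ffact_prod -[X in _ ^ X](card_ord j.+1) -prod_nat_const.
by apply: leq_prod => i _; apply: leq_sub2l; rewrite -ltnS.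
Qed.

Lemma ffact_le_exp n j : n ^_ j <= n ^ j.
Proof.
rewrite ffact_prod -[X in _ ^ X](card_ord j) -prod_nat_const.
by apply: leq_prod => i _; apply: leq_subr.
Qed.

Lemma sum_subn_exp_le (x : I -> nat) (c M j : nat) :
  \sum_(i in P) 'C(x i, j.+1) <= c * 'C(M, j.+1) ->
  (\sum_(i in P) (x i - j)) ^ j.+1 <= #|P| ^ j * (c * M ^ j.+1).
Proof.
move=> sumC_le; apply: leq_trans (sum_exp_le_card _ _) _.
rewrite leq_mul2l; apply/orP; right.
apply: (@leq_trans (\sum_(i in P) 'C(x i, j.+1) * j.+1`!)).
  by apply: leq_sum => i _; rewrite bin_ffact exp_subn_le_ffact.
rewrite -big_distrl /=; apply: leq_trans (leq_mul sumC_le (leqnn _)) _.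
by rewrite -mulnA bin_ffact leq_mul2l ffact_le_exp orbT.
Qed.

Lemma sum_exp_le_of_binomial (x : I -> nat) (c M j : nat) :
  \sum_(i in P) 'C(x i, j.+1) <= c * 'C(M, j.+1) ->
  j.+2 * #|P| < \sum_(i in P) x i ->
  (2 * \sum_(i in P) x i) ^ j.+1 <= j.+2 ^ j.+1 * (#|P| ^ j * (c * M ^ j.+1)).
Proof.
move=> sumC_le gt_sum.
have le_sum : \sum_(i in P) x i <= \sum_(i in P) (x i - j) + j * #|P|.
  rewrite mulnC -sum_nat_const -big_split; apply: leq_sum => i _ /=; lia.
have le2 : 2 * \sum_(i in P) x i <= j.+2 * \sum_(i in P) (x i - j) by nia.
apply: leq_trans (_ : (j.+2 * \sum_(i in P) (x i - j)) ^ j.+1 <= _).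
  by rewrite leq_exp2r.
by rewrite expnMn leq_mul2l sum_subn_exp_le ?orbT.
Qed.

End PowerMeans.

Local Open Scope ring_scope.

Lemma counting_bound_lt (R : realFieldType) (j : nat) (a m s M X : R) :
  0 <= a <= m -> 1 <= s -> s ^+ j.+2 = m ^+ j.+1 ->
  (j.+2)%:R * s - 1 < m -> 0 < M -> ((j.+2)%:R * s - 1) * M < X ->
  (j.+2)%:R ^+ j.+1 * (a ^+ j * ((j.+1)%:R * M ^+ j.+1)) < (2 * X) ^+ j.+1.
Proof.
move=> /andP [a_ge0 le_am] s_ge1 s_exp lt_m M_gt0 lt_X.
have k_split : (j.+2)%:R = (j.+1)%:R + 1 :> R by rewrite -natr1.
have j1_ge1 : 1 <= (j.+1)%:R :> R by rewrite ler1n.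
have c_gt0 : 0 < (j.+2)%:R * s - 1 by rewrite k_split; nra.
have le_js_m : (j.+1)%:R * s <= m by move: lt_m; rewrite k_split; lra.
have le_mexp : (j.+1)%:R * m ^+ j <= s ^+ j.+1.
  rewrite -(ler_pM2l (_ : 0 < s)) ?(lt_le_trans ltr01) // -exprS s_exp exprS.
  by rewrite mulrCA mulrA ler_wpM2r ?exprn_ge0 ?(le_trans a_ge0).
have le_ks : (j.+2)%:R * s <= 2 * ((j.+2)%:R * s - 1).
  by move: c_gt0; rewrite k_split; nra.
have Mexp_gt0 : 0 < M ^+ j.+1 by rewrite exprn_gt0.
apply: (@le_lt_trans _ _ (((j.+2)%:R * s) ^+ j.+1 * M ^+ j.+1)).
  rewrite exprMn -mulrA ler_pM2l ?exprn_gt0 ?ltr0n // mulrA ler_pM2r //.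
  apply: le_trans le_mexp; rewrite mulrC ler_pM2l ?ltr0n //.
  by rewrite lerXn2r ?nnegrE ?(le_trans a_ge0).
apply: (@le_lt_trans _ _ ((2 * (((j.+2)%:R * s - 1) * M)) ^+ j.+1)).
  rewrite mulrA [X in _ <= X]exprMn ler_pM2r // lerXn2r ?nnegrE //; nra.
rewrite ltrXn2r ?nnegrE //; nra.
Qed.

Lemma powR_1_subV_exp (R : realType) (m : R) (k : nat) : 0 <= m -> (0 < k)%N ->
  (m `^ (1 - k%:R^-1)) ^+ k = m ^+ k.-1.
Proof.
case: k => // k m_ge0 _.
have e : (1 - k.+1%:R^-1) * k.+1%:R = k%:R :> R.
  by rewrite mulrBl mul1r mulVf ?pnatr_eq0 // -natr1 addrK.
by rewrite -powR_mulrn ?powR_ge0 // -powRrM e powR_mulrn.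
Qed.

Lemma powR_1_subV_ge1 (R : realType) (m : R) (k : nat) : 1 <= m -> (0 < k)%N ->
  1 <= m `^ (1 - k%:R^-1).
Proof.
move=> m_ge1 k_gt0; rewrite -[X in X <= _](powRr0 m); apply: ler_powR => //.
by rewrite subr_ge0 invf_le1 ?ler1n // ltr0n.
Qed.

Section BipartiteGraphs.
Variables (A B : finType).
Implicit Types (G H : {set A * B}) (u w : A) (v : B).

Definition nbhdA H u : {set B} := [set v | (u, v) \in H].

Lemma card_sum_nbhdA H : #|H| = (\sum_u #|nbhdA H u|)%N.
Proof.
rewrite card_set_pair_sum; apply: eq_bigr => u _.
rewrite /nbhdA -sum1dep_card [RHS]big_mkcond.
by apply: eq_bigr => v _; case: ((u, v) \in H).
Qed.

Lemma codegA_set0 u w : codegA (set0 : {set A * B}) u w = 0%N.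
Proof. by apply: eq_card0 => v; rewrite !inE. Qed.

Lemma codegA_sym H u w : codegA H u w = codegA H w u.
Proof. by apply: eq_card => v; rewrite !inE andbC. Qed.

Lemma codegA_le_degA G H u w : H \subset G -> (codegA H u w <= degA G u)%N.
Proof.
move=> sHG; apply: subset_leq_card; apply/subsetP => v; rewrite !inE.
by case/andP => /(subsetP sHG).
Qed.

Lemma codegA_setU1 H u v p q : p != q ->
  (codegA (H :|: [set (u, v)]) p q
    <= codegA H p q
       + [|| (p == u) && ((q, v) \in H) | (q == u) && ((p, v) \in H)])%N.
Proof.
move=> ne_pq; set c := [|| _ | _].
apply: (@leq_trans
  #|[set b | ((p, b) \in H) && ((q, b) \in H)] :|: [set b | (b == v) && c]|).
  apply: subset_leq_card; apply/subsetP => b; rewrite !inE /= !xpair_eqE.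
  case/andP => /orP [pH | /andP [/eqP pu /eqP bv]]
               /orP [qH | /andP [/eqP qu /eqP bv']].
  - by rewrite pH qH.
  - by subst; rewrite /c !eqxx pH !orbT.
  - by subst; rewrite /c !eqxx qH !orbT.
  - by rewrite pu qu eqxx in ne_pq.
apply: leq_trans (leq_card_setU _ _).1 _; rewrite leq_add2l.
case: c => /=.
  rewrite -(cards1 v) subset_leq_card //.
  by apply/subsetP => b; rewrite !inE andbT.
by rewrite leqn0 cards_eq0; apply/eqP/setP => b; rewrite !inE andbF.
Qed.

Lemma Kst_free_card_lt G (S : {set A}) (T : {set B}) t :
  ~ contains_Kst G #|S| t -> (forall u v, u \in S -> v \in T -> (u, v) \in G) ->
  (#|T| < t)%N.
Proof.
move=> noK ST_G; rewrite ltnNge; apply/negP.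
move=> /exists_subset_card [T' sT'T cardT'].
by apply: noK; exists S, T'; split => // u v uS /(subsetP sT'T); apply: ST_G.
Qed.

Lemma sum_binomial_le_Kst_free G s t w (S : {set A}) (T : {set B}) :
  ~ contains_Kst G s.+1 t -> w \notin S -> (forall v, v \in T -> (w, v) \in G) ->
  (\sum_(v in T) 'C(#|[set u in S | (u, v) \in G]|, s) <= t.-1 * 'C(#|S|, s))%N.
Proof.
move=> noK wS Nw.
pose D := [set Y : {set A} | Y \subset S & #|Y| == s].
have binE v : 'C(#|[set u in S | (u, v) \in G]|, s)
    = #|[set Y in D | Y \subset [set u in S | (u, v) \in G]]|.
  rewrite -cards_draws; apply: eq_card => Y; rewrite !inE.
  case sY: (Y \subset _); rewrite ?andbF ?andbT //=.
  by rewrite (subset_trans sY) //; apply/subsetP => u; rewrite inE => /andP [].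
under eq_bigr do rewrite binE.
rewrite (@double_count _ _ _ _
  (fun v (Y : {set A}) => Y \subset [set u in S | (u, v) \in G])).
rewrite -cards_draws -/D mulnC -sum_nat_const; apply: leq_sum => Y.
rewrite inE => /andP [sYS /eqP cardY].
have wY : w \notin Y by apply: contra wS; apply: (subsetP sYS).
suff : (#|[set v in T | Y \subset [set u in S | (u, v) \in G]]| < t)%N by lia.
apply: (@Kst_free_card_lt G (w |: Y)); first by rewrite cardsU1 wY cardY.
move=> u v /setU1P [-> | uY]; rewrite inE => /andP [vT /subsetP YN].
  exact: Nw.
by have := YN u uY; rewrite inE => /andP [].
Qed.

Lemma not_contains_K11 G : ~ contains_Kst G 1 1 -> G = set0.
Proof.
move=> noK; apply/setP => -[u v]; rewrite inE; apply/negP => uvG; apply: noK.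
exists [set u], [set v]; split; rewrite ?cards1 //.
by move=> u' v' /set1P -> /set1P ->.
Qed.

Variable R : realFieldType.

Definition codegA_le H (t : R) : bool :=
  [forall u, forall u', (u != u') ==> ((codegA H u u')%:R <= t)].

Definition heavyA H (t : R) w : {set A} :=
  [set u | (u != w) && (t - 1 < (codegA H u w)%:R)].

Lemma codegA_leP H (t : R) :
  reflect (forall u u', u != u' -> (codegA H u u')%:R <= t) (codegA_le H t).
Proof.
apply: (iffP forallP) => [le_t u u' | le_t u].
  by apply/implyP; move/forallP: (le_t u).
by apply/forallP => u'; apply/implyP/le_t.
Qed.

Lemma codegA_setU1_gt H (t : R) u v :
  codegA_le H t -> ~~ codegA_le (H :|: [set (u, v)]) t ->
  exists2 w, (w, v) \in H & u \in heavyA H t w.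
Proof.
move=> /codegA_leP le_t /forallPn [p /forallPn [q]].
rewrite negb_imply -ltNge => /andP [ne_pq lt_t].
have := @codegA_setU1 H u v _ _ ne_pq; rewrite -(ler_nat R) natrD.
case/boolP: [|| _ | _] => [new_pq | _] /= le_new; last first.
  by move: (le_t p q ne_pq) le_new lt_t; rewrite mulr0n addr0; lra.
have heavy_pq : t - 1 < (codegA H p q)%:R.
  by move: lt_t le_new; rewrite mulr1n; lra.
case/orP: new_pq => /andP [/eqP <- vH]; [exists q | exists p] => //; rewrite inE.
  by rewrite ne_pq.
by rewrite eq_sym ne_pq codegA_sym.
Qed.

Lemma heavyA_sum_gt G H (t : R) w : H \subset G -> (0 < #|heavyA H t w|)%N ->
  (t - 1) * #|heavyA H t w|%:R
    < (\sum_(v in nbhdA H w) #|[set u in heavyA H t w | (u, v) \in G]|)%:R.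
Proof.
move=> sHG /card_gt0P [u0 u0S].
rewrite (@double_count _ _ _ _ (fun v u => (u, v) \in G)) natr_sum.
rewrite mulr_natr -sumr_const; apply: ltr_sum => [|u].
  by apply/hasP; exists u0; rewrite ?mem_index_enum.
rewrite inE => /andP [_ heavy_u]; apply: lt_le_trans heavy_u _; rewrite ler_nat.
apply: subset_leq_card; apply/subsetP => v; rewrite !inE => /andP [uvH wvH].
by rewrite wvH (subsetP sHG).
Qed.

Lemma card_le_charge (E D F : {set A * B}) (S : A -> {set A}) :
  E \subset D ->
  (forall u v, (u, v) \in E -> exists2 w, (w, v) \in F & u \in S w) ->
  (#|E| <= \sum_w \sum_(v in nbhdA F w) #|[set u in S w | (u, v) \in D]|)%N.
Proof.
move=> sED charge.
pose f u v w : nat := [&& (w, v) \in F, u \in S w & (u, v) \in D].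
have -> : (\sum_w \sum_(v in nbhdA F w) #|[set u in S w | (u, v) \in D]|
    = \sum_u \sum_v \sum_w f u v w)%N.
  symmetry; rewrite exchange_big; under eq_bigr do rewrite exchange_big.
  rewrite exchange_big /=; apply: eq_bigr => w _.
  rewrite [RHS]big_mkcond; apply: eq_bigr => v _.
  rewrite card_set_in_sum big_mkcond /= inE /f.
  case: ((w, v) \in F) => /=; last by rewrite big1.
  by rewrite [RHS]big_mkcond; apply: eq_bigr => u _; case: (u \in S w).
rewrite card_set_pair_sum; apply: leq_sum => u _; apply: leq_sum => v _.
case: (boolP ((u, v) \in E)) => //= uvE; have [w wvF uSw] := charge u v uvE.
by rewrite (bigD1 w) //= /f wvF uSw (subsetP sED).
Qed.

Lemma sum_heavyA_le G H j (m s : R) w :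
  ~ contains_Kkk G j.+2 -> H \subset G -> (forall u, (degA G u)%:R <= m) ->
  (1 <= m -> 1 <= s) -> s ^+ j.+2 = m ^+ j.+1 ->
  (\sum_(v in nbhdA H w) #|[set u in heavyA H ((j.+2)%:R * s) w | (u, v) \in G]|
     <= j.+2 * #|nbhdA H w|)%N.
Proof.
move=> noK sHG deg_le s_ge1 s_exp.
set S := heavyA H _ w; set N := nbhdA H w; set X := (\sum_(v in N) _)%N.
rewrite leqNgt; apply/negP => lt_X.
have wS : w \notin S by rewrite inE eqxx.
have NG v : v \in N -> (w, v) \in G by rewrite inE => /(subsetP sHG).
have count := sum_exp_le_of_binomial
  (@sum_binomial_le_Kst_free G j.+1 j.+2 w S N noK wS NG) lt_X.
have le_Nm : #|N|%:R <= m.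
  apply: le_trans (deg_le w); rewrite ler_nat; apply: subset_leq_card.
  by apply/subsetP => v /NG; rewrite inE.
have le_X : (X <= #|N| * #|S|)%N.
  rewrite -sum_nat_const; apply: leq_sum => v _; apply: subset_leq_card.
  by apply/subsetP => u; rewrite inE => /andP [].
have /andP [N_gt0 S_gt0] : ((0 < #|N|) && (0 < #|S|))%N.
  by rewrite -muln_gt0 (leq_trans _ le_X) // (leq_ltn_trans _ lt_X).
have m_ge1 : 1 <= m by apply: le_trans le_Nm; rewrite ler1n.
have lt_m : (j.+2)%:R * s - 1 < m.
  case/card_gt0P: S_gt0 => u; rewrite inE => /andP [_ /lt_le_trans]; apply.
  by apply: le_trans (deg_le u); rewrite ler_nat codegA_le_degA.
have N_ok : 0 <= (#|N|%:R : R) <= m by rewrite ler0n le_Nm.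
have S_pos : 0 < #|S|%:R :> R by rewrite ltr0n.
have := counting_bound_lt N_ok (s_ge1 m_ge1) s_exp lt_m S_pos
  (heavyA_sum_gt sHG S_gt0).
rewrite -(ler_nat R) !(natrM, natrX) in count.
by move=> /lt_le_trans /(_ count); rewrite ltxx.
Qed.

End BipartiteGraphs.

Theorem lemma3p2 (R : realType) (k : nat) (m : R) (A B : finType)
    (G : {set A * B}) :
  (0 < k)%N -> 0 < m ->
  ~ contains_Kkk G k ->
  (forall u : A, (degA G u)%:R <= m) ->
  exists G' : {set A * B},
    [/\ G' \subset G,
        (#|G|%:R / (k.+1)%:R <= (#|G'|%:R : R)) &
        forall u u' : A, u != u' ->
          (codegA G' u u')%:R <= k%:R * m `^ (1 - k%:R^-1)].
Proof.
move=> k_gt0 m_gt0 noK deg_le.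
case: k k_gt0 noK => [// | [|j]] _ noK.
  rewrite (not_contains_K11 noK); exists set0; split; rewrite ?cards0 ?mul0r //.
  by move=> u u' _; rewrite codegA_set0 mul1r powR_ge0.
set s := m `^ _; set t := _ * s.
have s_exp : s ^+ j.+2 = m ^+ j.+1 by rewrite powR_1_subV_exp ?ltW.
have s_ge1 : 1 <= m -> 1 <= s by move=> m_ge1; rewrite powR_1_subV_ge1.
pose P (H : {set A * B}) := (H \subset G) && codegA_le H t.
have [G' /maxsetP [/andP [sG'G cod_le] G'_max] _] :
    {G' | maxset P G' & set0 \subset G'}.
  apply: maxset_exists; rewrite /P sub0set; apply/codegA_leP => u u' _.
  by rewrite codegA_set0 mulr_ge0 ?powR_ge0.
have charge u v :
    (u, v) \in G :\: G' -> exists2 w, (w, v) \in G' & u \in heavyA G' t w.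
  rewrite inE => /andP [uvG' uvG]; apply: codegA_setU1_gt => //.
  apply: contra uvG' => cod; rewrite -(G'_max (G' :|: [set (u, v)])) ?subsetUl //.
    by rewrite !inE eqxx orbT.
  by rewrite /P subUset sG'G sub1set uvG cod.
have le_missing := card_le_charge (subsetDl G G') charge.
exists G'; split => //; last by apply/codegA_leP.
rewrite ler_pdivrMr ?ltr0n // -natrM ler_nat.
rewrite -(cardsID G' G) (setIidPr sG'G) mulnS.
rewrite leq_add2l (leq_trans le_missing) // (card_sum_nbhdA G') big_distrl.
apply: leq_sum => w _.
by rewrite /= mulnC (sum_heavyA_le _ noK sG'G deg_le s_ge1 s_exp).
Qed.
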